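(* Let $\mathfrak{C}$ be a category, $\mathbb{K}$ a field, and $\mathfrak{I}$ an ideal of $\mathfrak{C}$ (possibly empty). The group $m_{\mathfrak{I}}(\mathfrak{C})$ consists exactly of the factor sets $\rho\in m(\mathfrak{C})$ such that, for all $x,y\in\mathfrak{C}$, $$\rho(x,y) = 0 \iff xy \text{ is not defined, or } xy \text{ is defined and } xy \in \mathfrak{I}.$$
   Context: A category is a semigroupoid (set with partial associative product) where each $x$ has unique identities $r(x),d(x)$ with $r(x)x=x=xd(x)$ and $xy$ is defined iff $d(x)=r(y)$. An ideal $\mathfrak{I}$ of $\mathfrak{C}$: $xy,yx\in\mathfrak{I}$ whenever $y\in\mathfrak{I}$ and the product is defined. A $\mathbb{K}$-semigroup is a semigroup with zero with a compatible scalar action of $\mathbb{K}$ ($\alpha(\beta x)=(\alpha\beta)x$, $1x=x$, $\alpha(xy)=(\alpha x)y=x(\alpha y)$, $0x=0$); $\mathbb{K}$-cancellative if $\alpha x=\beta x$, $x\neq0$ imply $\alpha=\beta$. A projective representation of $\mathfrak{C}$ on a $\mathbb{K}$-cancellative semigroup $S$ is $\Gamma:\mathfrak{C}\to S$ with: if $xy$ defined, $\Gamma(xy)=0\iff\Gamma(x)\Gamma(y)=0$; if undefined, $\Gamma(x)\Gamma(y)=0$; and $\Gamma(x)\Gamma(y)=\Gamma(xy)\rho(x,y)$, $\rho(x,y)\in\mathbb{K}^*$, whenever $xy$ defined and $\Gamma(xy)\ne0$; $\rho$, extended by $0$ elsewhere, is its factor set. $m(\mathfrak{C})$ is the commutative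 regular semigroup of all factor sets under pointwise multiplication. Its idempotents correspond to ideals: for an ideal $\mathfrak{I}$, $\epsilon_{\mathfrak{I}}(x,y)=0$ if $xy$ is undefined or $xy\in\mathfrak{I}$, and $\epsilon_{\mathfrak{I}}(x,y)=1$ otherwise. $m_{\mathfrak{I}}(\mathfrak{C})$ denotes the maximal subgroup of $m(\mathfrak{C})$ with identity $\epsilon_{\mathfrak{I}}$, i.e. the set of $\rho\in m(\mathfrak{C})$ with $\rho\rho^{-1}=\epsilon_{\mathfrak{I}}$, where $\rho^{-1}$ is the inverse of $\rho$ in $m(\mathfrak{C})$. *)

From HB Require Import structures.
From mathcomp Require Import all_boot all_algebra.
Set Implicit Arguments. Unset Strict Implicit. Unset Printing Implicit Defensive.
Import GRing.Theory.
Local Open Scope ring_scope.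

Definition obind' {A B : Type} (o : option A) (f : A -> option B) : option B :=
  match o with Some a => f a | None => None end.

Record category := Category {
  cobj :> Type;
  cmul : cobj -> cobj -> option cobj;
  cr : cobj -> cobj;
  cd : cobj -> cobj
}.

Section CatAxioms.
Variable C : category.
Definition cdefined (x y : C) : Prop := cmul x y <> None.

Definition is_identity (e : C) : Prop :=
  (forall y : C, cdefined e y -> cmul e y = Some y) /\
  (forall y : C, cdefined y e -> cmul y e = Some y).

Definition category_axioms : Prop :=
  (forall x y z : C,
     obind' (cmul x y) (fun a => cmul a z) = obind' (cmul y z) (fun b => cmul x b)) /\
  (forall x : C, is_identity (cr x) /\ is_identity (cd x)) /\
  (forall x : C, cmul (cr x) x = Some x /\ cmul x (cd x) = Some x) /\
  (forall x e : C, is_identity e -> cmul e x = Some x -> e = cr x) /\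
  (forall x e : C, is_identity e -> cmul x e = Some x -> e = cd x) /\
  (forall x y : C, cdefined x y <-> cd x = cr y).

Definition is_ideal (I : C -> Prop) : Prop :=
  forall x y z : C, cmul x y = Some z -> (I x \/ I y) -> I z.
End CatAxioms.

Record kSemigroup (K : fieldType) := KSemigroup {
  ksg :> Type;
  kmul : ksg -> ksg -> ksg;
  kzero : ksg;
  kact : K -> ksg -> ksg
}.

Section KSemigroupAxioms.
Variables (K : fieldType) (S : kSemigroup K).
Local Notation "x ** y" := (kmul x y) (at level 40, left associativity).
Definition kSemigroup_axioms : Prop :=
  (forall x y z : S, x ** (y ** z) = (x ** y) ** z) /\
  (forall x : S, x ** kzero S = kzero S /\ kzero S ** x = kzero S) /\
  (forall (a b : K) (x : S), kact a (kact b x) = kact (a * b) x) /\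
  (forall x : S, kact 1 x = x) /\
  (forall (a : K) (x y : S), kact a (x ** y) = (kact a x) ** y /\
                             kact a (x ** y) = x ** (kact a y)) /\
  (forall x : S, kact 0 x = kzero S).

Definition K_cancellative : Prop :=
  forall (a b : K) (x : S), kact a x = kact b x -> x <> kzero S -> a = b.
End KSemigroupAxioms.

Section Proj.
Variables (K : fieldType) (C : category).

(* Gamma : C -> S is a projective representation with factor set rho
   (rho extended by 0 where xy is undefined or Gamma(xy) = 0). *)
Definition proj_rep_with_factor_set (S : kSemigroup K) (G : C -> S)
    (rho : C -> C -> K) : Prop :=
  forall x y : C,
    match cmul x y with
    | Some z =>
        (G z = kzero S <-> kmul (G x) (G y) = kzero S) /\
        (G z = kzero S -> rho x y = 0) /\
        (G z <> kzero S -> rho x y <> 0 /\ kmul (G x) (G y) = kact (rho x y) (G z))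
    | None => kmul (G x) (G y) = kzero S /\ rho x y = 0
    end.

Definition factor_set (rho : C -> C -> K) : Prop :=
  exists (S : kSemigroup K) (G : C -> S),
    kSemigroup_axioms S /\ K_cancellative S /\ proj_rep_with_factor_set G rho.

Definition fs_mul (rho sigma : C -> C -> K) : C -> C -> K :=
  fun x y => rho x y * sigma x y.
Definition fs_eq (rho sigma : C -> C -> K) : Prop :=
  forall x y : C, rho x y = sigma x y.

Definition fs_inverse (rho sigma : C -> C -> K) : Prop :=
  factor_set sigma /\
  fs_eq (fs_mul (fs_mul rho sigma) rho) rho /\
  fs_eq (fs_mul (fs_mul sigma rho) sigma) sigma.

Definition is_eps (I : C -> Prop) (e : C -> C -> K) : Prop :=
  forall x y : C,
    match cmul x y with
    | None => e x y = 0
    | Some z => (I z -> e x y = 0) /\ (~ I z -> e x y = 1)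
    end.

Definition m_I (I : C -> Prop) (rho : C -> C -> K) : Prop :=
  factor_set rho /\
  exists sigma, fs_inverse rho sigma /\ is_eps I (fs_mul rho sigma).
End Proj.

(* The pointwise product of factor sets makes m(C) a commutative regular
   semigroup in which the inverse of rho is its pointwise inverse (the
   representation is kept, the scalar action is replaced by a |-> a^-1).
   Any semigroup inverse sigma of rho satisfies rho sigma rho = rho, which
   forces rho sigma to be the 0/1 indicator of the support of rho; hence
   rho rho^-1 = epsilon_I says exactly that rho vanishes where epsilon_I does. *)
From mathcomp Require Import all_boot all_algebra.
From Stdlib Require Import Classical.
Set Implicit Arguments. Unset Strict Implicit. Unset Printing Implicit Defensive.
Import GRing.Theory.
Local Open Scope ring_scope.

Section InvAction.
Variables (K : fieldType) (S : kSemigroup K).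

Definition inv_kSemigroup : kSemigroup K :=
  @KSemigroup K S (@kmul K S) (kzero S) (fun a x => kact a^-1 x).

Lemma inv_kSemigroup_axioms :
  kSemigroup_axioms S -> kSemigroup_axioms inv_kSemigroup.
Proof.
move=> [mulA [mul0 [actM [act1 [actMl act0]]]]].
split; first exact: mulA.
split; first exact: mul0.
split; first by move=> a b x /=; rewrite actM invfM.
split; first by move=> x /=; rewrite invr1 act1.
split; first by move=> a x y /=; apply: actMl.
by move=> x /=; rewrite invr0 act0.
Qed.

Lemma inv_K_cancellative :
  K_cancellative S -> K_cancellative inv_kSemigroup.
Proof.
move=> cancS a b x /= eq_ab x_neq0.
by rewrite -[a]invrK -[b]invrK (cancS _ _ _ eq_ab x_neq0).
Qed.

End InvAction.

Section FactorSets.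
Variables (K : fieldType) (C : category).
Implicit Types (rho sigma e : C -> C -> K) (I : C -> Prop).

Definition fs_inv rho : C -> C -> K := fun x y => (rho x y)^-1.

Definition fs_supp rho : C -> C -> K := fun x y => if rho x y == 0 then 0 else 1.

Definition eps_zero I (x y : C) : Prop :=
  cmul x y = None \/ exists z, cmul x y = Some z /\ I z.

Lemma factor_set_inv rho : factor_set rho -> factor_set (fs_inv rho).
Proof.
move=> [S [G [axS [cancS repG]]]].
exists (inv_kSemigroup S), G; split; first exact: inv_kSemigroup_axioms.
split; first exact: inv_K_cancellative.
move=> x y; have := repG x y; rewrite /fs_inv.
case: (cmul x y) => [z|] /=; last by move=> [-> ->]; rewrite invr0.
move=> [zeroG [rho0 rho_nz]]; split=> //; split; first by move=> /rho0 ->; rewrite invr0.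
move=> /rho_nz [nz ->]; split; last by rewrite /= invrK.
by apply/eqP; rewrite invr_eq0; apply/eqP.
Qed.

Lemma fs_mul_regular rho sigma :
  fs_eq (fs_mul (fs_mul rho sigma) rho) rho -> fs_eq (fs_mul rho sigma) (fs_supp rho).
Proof.
move=> reg x y; have := reg x y; rewrite /fs_mul /fs_supp.
have [-> _ | nz] := eqVneq (rho x y) 0; first by rewrite mul0r.
by rewrite -[RHS]mul1r => /(mulIf nz).
Qed.

Lemma fs_inverse_inv rho : factor_set rho -> fs_inverse rho (fs_inv rho).
Proof.
move=> fs_rho; split; first exact: factor_set_inv.
split=> x y; rewrite /fs_mul /fs_inv.
  by have [-> | nz] := eqVneq (rho x y) 0; rewrite ?mul0r ?mulfV ?mul1r.
by have [-> | nz] := eqVneq (rho x y) 0; rewrite ?invr0 ?mul0r ?mulVf ?mul1r.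
Qed.

Lemma is_eps_eq I e e' : fs_eq e e' -> is_eps I e -> is_eps I e'.
Proof. by move=> ee' eps_e x y; rewrite -ee'; exact: eps_e. Qed.

Lemma is_eps_supp I rho :
  is_eps I (fs_supp rho) <-> forall x y, rho x y = 0 <-> eps_zero I x y.
Proof.
rewrite /is_eps /fs_supp /eps_zero; split=> eps x y; have := eps x y.
- have [-> | nz] := eqVneq (rho x y) 0.
    case: (cmul x y) => [z [_ nI_one] | _]; last by split=> // _; left.
    split=> // _; right; exists z.
    by split=> //; apply: NNPP => /nI_one /eqP; rewrite eq_sym oner_eq0.
  case: (cmul x y) => [z|] /=; last by move/eqP; rewrite oner_eq0.
  move=> [I_zero _]; split=> [rho0 | [//|[_ [[<-] /I_zero /eqP]]]].
    by move: nz; rewrite rho0 eqxx.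
  by rewrite oner_eq0.
- have [rho0 | nz] := eqVneq (rho x y) 0; move=> [rho0_eps eps_rho0].
    case: (cmul x y) (rho0_eps rho0) => [z|] // [//|[_ [[<-] Iz]]].
    by split=> // /(_ Iz).
  case: (cmul x y) eps_rho0 => [z|] eps_rho0.
    by split=> // Iz; move: nz; rewrite eps_rho0 ?eqxx //; right; exists z.
  by move: nz; rewrite eps_rho0 ?eqxx //; left.
Qed.

Lemma m_I_supp I rho : m_I I rho <-> factor_set rho /\ is_eps I (fs_supp rho).
Proof.
split=> [[fs_rho [sigma [[_ [reg _]] eps]]] | [fs_rho eps]]; split=> //.
  exact: is_eps_eq (fs_mul_regular reg) eps.
exists (fs_inv rho); split; first exact: fs_inverse_inv.
have [_ [reg _]] := fs_inverse_inv fs_rho.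
by apply: is_eps_eq eps => x y; rewrite (fs_mul_regular reg).
Qed.

End FactorSets.

Theorem mainTheorem8 (C : category) (K : fieldType) (I : C -> Prop) :
  category_axioms C -> is_ideal I ->
  forall rho : C -> C -> K,
    m_I I rho <->
    (factor_set rho /\
     forall x y : C,
       rho x y = 0 <->
       (cmul x y = None \/ exists z, cmul x y = Some z /\ I z)).
Proof.
move=> _ _ rho; rewrite m_I_supp.
by split=> -[fs_rho eps]; split=> //; apply/is_eps_supp.
Qed.
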